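(* For any terms $s,t$, $\mathbf{W}\models s\approx t$ if, and only if, $\mathbf{R}\models s\approx t$.
   Context: Let $\omega^+=\omega\cup\{\omega\}$ with its natural order. A time warp is a map $f\colon\omega^+\to\omega^+$ preserving arbitrary joins (equivalently, order-preserving with $f(0)=0$ and $f(\omega)=\bigvee\{f(n)\mid n\in\omega\}$). Let $W$ be the set of time warps, ordered pointwise; let $p\in W$ be the predecessor map $p(m)=\bigvee\{n\in\omega\mid n<m\}$; for $f,g\in W$ let $f\backslash g$ be the largest time warp $h$ with $f\circ h\le g$. The time warp algebra is $\mathbf{W}=\langle W,\wedge,\vee,\circ,{}^\star,\mathrm{id}\rangle$ with pointwise meet/join, composition, $f^\star:=f\backslash p$, and identity. A time warp $f$ is regular if there exist $m\in\omega$, $l\in\{0,1\}$ and $k\in\mathbb{Z}\cup\{\omega\}$ with $f(n)=ln+k$ for all $n\in\omega$ with $n\ge m$ (i.e. $f$ is eventually constant or eventually of the form $n\mapsto n+k$). $\mathbf{R}$ denotes the subalgebra of $\mathbf{W}$ consisting of regular time warps. Terms are built from variables using $\wedge,\vee,\cdot,{}',1$, interpreted as $\wedge,\vee,\circ,{}^\star,\mathrm{id}$; an algebra satisfies $s\approx t$ if $s,t$ agree under every assignment into it. *)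

From Stdlib Require Import Arith ZArith Lia ClassicalEpsilon.

Inductive wp : Type := Fin (n : nat) | Om.

Definition lew (x y : wp) : Prop :=
  match x, y with
  | Fin n, Fin m => n <= m
  | _, Om => True
  | Om, Fin _ => False
  end.

Definition ltw (x y : wp) : Prop := lew x y /\ x <> y.

Definition is_lub (P : wp -> Prop) (y : wp) : Prop :=
  (forall x, P x -> lew x y) /\ (forall z, (forall x, P x -> lew x z) -> lew y z).

(* the join of an arbitrary subset of omega^+ (which is a complete lattice) *)
Definition supw (P : wp -> Prop) : wp :=
  epsilon (inhabits Om) (is_lub P).

Definition minw (x y : wp) : wp :=
  match x, y with
  | Fin n, Fin m => Fin (Nat.min n m)
  | Om, y => y
  | x, Om => x
  end.

Definition maxw (x y : wp) : wp :=
  match x, y with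
  | Fin n, Fin m => Fin (Nat.max n m)
  | Om, _ => Om
  | _, Om => Om
  end.

Definition is_warp (f : wp -> wp) : Prop :=
  (forall x y, lew x y -> lew (f x) (f y)) /\
  f (Fin 0) = Fin 0 /\
  f Om = supw (fun y => exists n, y = f (Fin n)).

Definition lef (f g : wp -> wp) : Prop := forall x, lew (f x) (g x).

Definition pred_warp (x : wp) : wp :=
  supw (fun y => exists n, y = Fin n /\ ltw (Fin n) x).

(* f \ g : the largest time warp h with f o h <= g, computed as the pointwise
   join of all such h *)
Definition resid (f g : wp -> wp) (x : wp) : wp :=
  supw (fun y => exists h, is_warp h /\ lef (fun z => f (h z)) g /\ y = h x).

Definition star (f : wp -> wp) : wp -> wp := resid f pred_warp.

(* regular time warps: eventually n |-> l n + k with l in {0,1}, k in Z ∪ {omega} *)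
Definition regular (f : wp -> wp) : Prop :=
  exists (m : nat) (l : nat) (k : option Z),
    (l = 0 \/ l = 1) /\
    forall n : nat, m <= n ->
      match k with
      | None => f (Fin n) = Om
      | Some k => (0 <= Z.of_nat (l * n) + k)%Z /\
                  f (Fin n) = Fin (Z.to_nat (Z.of_nat (l * n) + k))
      end.

Inductive term : Type :=
  | tVar (i : nat)
  | tMeet (s t : term)
  | tJoin (s t : term)
  | tComp (s t : term)
  | tStar (s : term)
  | tOne.

Fixpoint eval (t : term) (sigma : nat -> wp -> wp) : wp -> wp :=
  match t with
  | tVar i => sigma i
  | tMeet s u => fun x => minw (eval s sigma x) (eval u sigma x)
  | tJoin s u => fun x => maxw (eval s sigma x) (eval u sigma x)
  | tComp s u => fun x => eval s sigma (eval u sigma x)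
  | tStar s => star (eval s sigma)
  | tOne => fun x => x
  end.

(* The algebra with carrier {f | C f} (W for C = is_warp, R for C = regular
   time warps) satisfies s ≈ t. *)
Definition satisfies (C : (wp -> wp) -> Prop) (s t : term) : Prop :=
  forall sigma : nat -> wp -> wp, (forall i, C (sigma i)) ->
    forall x, eval s sigma x = eval t sigma x.

Definition W_carrier (f : wp -> wp) : Prop := is_warp f.
Definition R_carrier (f : wp -> wp) : Prop := is_warp f /\ regular f.

From Stdlib Require Import Wf_nat ZArith Lia ClassicalEpsilon Classical FunctionalExtensionality.

(* Every time warp f is the limit of the regular time warps [trunc f M], which
   agree with f up to M and then grow with slope one until they reach f(omega);
   the limit is pointwise and eventually exact.  All operations of W preserve
   such limits.  For the star
   we use the explicit form f*(0) = 0, f*(n+1) = max {z | f z <= n} (the residual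
   of f against the predecessor map is computed through the right adjoint of f);
   its value at omega depends on whether f takes only finite values on the
   naturals, so the approximations must also inherit this from their limit.  Consequently,
   for every term t and every assignment sigma into W, the value of t under
   sigma at any point equals its value under the regular assignment
   [trunc (sigma i) M] for M large, and an identity valid in R holds in W. *)

Lemma lew_refl x : lew x x.
Proof. destruct x; simpl; auto. Qed.

Lemma lew_trans x y z : lew x y -> lew y z -> lew x z.
Proof. destruct x, y, z; simpl; intros; try tauto; lia. Qed.

Lemma lew_total x y : lew x y \/ lew y x.
Proof. destruct x, y; simpl; auto; lia. Qed.

Lemma lew_antisym x y : lew x y -> lew y x -> x = y.
Proof. destruct x, y; simpl; intros; try tauto; f_equal; lia. Qed.

Lemma lew_Om x : lew x Om.
Proof. destruct x; simpl; auto. Qed.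

Lemma Fin0_lew x : lew (Fin 0) x.
Proof. destruct x; simpl; auto; lia. Qed.

Lemma Om_lew x : lew Om x -> x = Om.
Proof. destruct x; simpl; tauto. Qed.

Lemma lew_Fin_or_FinS x k : lew x (Fin k) \/ lew (Fin (S k)) x.
Proof. destruct x; simpl; auto; lia. Qed.

Lemma Fin_lew_all x : (forall k, lew (Fin k) x) -> x = Om.
Proof. intros H. destruct x as [m|]; auto. specialize (H (S m)). simpl in H; lia. Qed.

Lemma lew_minw x y z : lew z (minw x y) <-> lew z x /\ lew z y.
Proof. destruct x, y, z; simpl; intuition lia. Qed.

Lemma lew_maxw x y z : lew z (maxw x y) <-> lew z x \/ lew z y.
Proof. destruct x, y, z; simpl; intuition lia. Qed.

Lemma minw_lew_r x y : lew (minw x y) y.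
Proof. destruct x, y; simpl; auto; lia. Qed.

Lemma minw_mono x x' y y' : lew x x' -> lew y y' -> lew (minw x y) (minw x' y').
Proof. destruct x, x', y, y'; simpl; intros; try tauto; lia. Qed.

Lemma maxw_mono x x' y y' : lew x x' -> lew y y' -> lew (maxw x y) (maxw x' y').
Proof. destruct x, x', y, y'; simpl; intros; try tauto; lia. Qed.

(** * Suprema in omega^+ *)

Lemma lub_exists (P : wp -> Prop) : exists y, is_lub P y.
Proof.
  destruct (classic (exists n, forall x, P x -> lew x (Fin n))) as [Hb|Hunb].
  - destruct (dec_inh_nat_subset_has_unique_least_element
                (fun n => forall x, P x -> lew x (Fin n)) (fun n => classic _) Hb)
      as [n [[Hn Hmin] _]].
    exists (Fin n). split; [exact Hn|].
    intros [m|] Hm; simpl; [exact (Hmin m Hm)|exact I].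
  - exists Om. split; [intros; apply lew_Om|].
    intros [m|] Hm; simpl; [apply Hunb; eauto|exact I].
Qed.

Lemma supw_spec P : is_lub P (supw P).
Proof. unfold supw. apply epsilon_spec, lub_exists. Qed.

Lemma supw_ub (P : wp -> Prop) x : P x -> lew x (supw P).
Proof. apply (proj1 (supw_spec P)). Qed.

Lemma supw_least (P : wp -> Prop) z : (forall x, P x -> lew x z) -> lew (supw P) z.
Proof. apply (proj2 (supw_spec P)). Qed.

Lemma supw_eq P y : is_lub P y -> supw P = y.
Proof.
  intros [Hub Hleast]. apply lew_antisym.
  - apply supw_least, Hub.
  - apply Hleast, supw_spec.
Qed.

Lemma supw_witness (P : wp -> Prop) k :
  lew (Fin (S k)) (supw P) -> exists x, P x /\ lew (Fin (S k)) x.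
Proof.
  intros Hk. apply NNPP. intros Hno.
  assert (Hle : lew (supw P) (Fin k)).
  { apply supw_least. intros x Hx.
    destruct (lew_Fin_or_FinS x k) as [H|H]; [exact H|exfalso; eauto]. }
  pose proof (lew_trans _ _ _ Hk Hle). simpl in *; lia.
Qed.

Definition eventually (P : nat -> Prop) : Prop := exists M0, forall M, M0 <= M -> P M.

Lemma eventually_always (P : nat -> Prop) : (forall M, P M) -> eventually P.
Proof. intros H. exists 0. auto. Qed.

Lemma eventually_ge k : eventually (fun M => k <= M).
Proof. exists k. auto. Qed.

Lemma eventually_and (P Q : nat -> Prop) :
  eventually P -> eventually Q -> eventually (fun M => P M /\ Q M).
Proof.
  intros [a Ha] [b Hb]. exists (Nat.max a b). intros M HM. split; [apply Ha|apply Hb]; lia.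
Qed.

Lemma eventually_mono (P Q : nat -> Prop) :
  (forall M, P M -> Q M) -> eventually P -> eventually Q.
Proof. intros H [a Ha]. exists a. auto. Qed.

Lemma eventually_witness (P : nat -> Prop) : eventually P -> exists M, P M.
Proof. intros [a Ha]. exists a. auto. Qed.
(** * Time warps *)

Definition monotone (f : wp -> wp) : Prop := forall x y, lew x y -> lew (f x) (f y).

Definition liminf_ge (a : nat -> wp) (b : wp) : Prop :=
  forall k, lew (Fin k) b -> eventually (fun n => lew (Fin k) (a n)).

Definition finite_valued (f : wp -> wp) : Prop := forall n, f (Fin n) <> Om.

Section Warp.
Variable f : wp -> wp.
Hypothesis Hf : is_warp f.

Lemma warp_mono x y : lew x y -> lew (f x) (f y).
Proof. apply Hf. Qed.

Lemma warp_Fin0 : f (Fin 0) = Fin 0.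
Proof. apply Hf. Qed.

Lemma warp_le_Om x : lew (f x) (f Om).
Proof. apply warp_mono, lew_Om. Qed.

Lemma warp_Om_up x y : f x = Om -> lew x y -> f y = Om.
Proof. intros Hx Hxy. apply Om_lew. rewrite <- Hx. apply warp_mono, Hxy. Qed.

Lemma warp_liminf : liminf_ge (fun n => f (Fin n)) (f Om).
Proof.
  intros [|k] Hk.
  - apply eventually_always. intros; apply Fin0_lew.
  - rewrite (proj2 (proj2 Hf)) in Hk.
    destruct (supw_witness _ _ Hk) as [x [[n0 ->] Hn0]].
    exists n0. intros n Hn. eapply lew_trans; [exact Hn0|apply warp_mono; simpl; lia].
Qed.

(* A time warp preserves all joins, not only the join of [Fin n]. *)
Lemma warp_supw_least (P : wp -> Prop) y :
  (forall z, P z -> lew (f z) y) -> lew (f (supw P)) y.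
Proof.
  intros HP. destruct (supw P) as [[|k]|] eqn:Hs.
  - rewrite warp_Fin0. apply Fin0_lew.
  - destruct (supw_witness P k) as [z [Hz Hkz]]; [rewrite Hs; apply lew_refl|].
    eapply lew_trans; [apply warp_mono, Hkz|apply HP, Hz].
  - rewrite (proj2 (proj2 Hf)). apply supw_least. intros x [m ->].
    destruct (supw_witness P m) as [z [Hz Hmz]]; [rewrite Hs; exact I|].
    eapply lew_trans; [apply warp_mono|apply HP, Hz].
    eapply lew_trans; [|exact Hmz]. simpl; lia.
Qed.

Lemma warp_finite_valued : f Om <> Om -> finite_valued f.
Proof.
  intros HOm n Hn. apply HOm, Om_lew. rewrite <- Hn at 1. apply warp_le_Om.
Qed.

End Warp.

Lemma warp_intro f :
  monotone f -> f (Fin 0) = Fin 0 -> liminf_ge (fun n => f (Fin n)) (f Om) -> is_warp f.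
Proof.
  intros Hm H0 Hlim. split; [exact Hm|split; [exact H0|]].
  symmetry. apply supw_eq. split.
  - intros x [n ->]. apply Hm, lew_Om.
  - intros [m|] Hub; [|apply lew_Om].
    destruct (lew_Fin_or_FinS (f Om) m) as [H|H]; [exact H|exfalso].
    destruct (eventually_witness _ (Hlim _ H)) as [n Hn].
    pose proof (lew_trans _ _ _ Hn (Hub _ (ex_intro _ n eq_refl))). simpl in *; lia.
Qed.

Lemma id_warp : is_warp (fun x => x).
Proof.
  apply warp_intro; [intros x y H; exact H|reflexivity|].
  intros k _. exists k. intros n Hn. simpl; lia.
Qed.

Lemma meet_warp f g : is_warp f -> is_warp g -> is_warp (fun x => minw (f x) (g x)).
Proof.
  intros Hf Hg. apply warp_intro.
  - intros x y H. apply minw_mono; apply warp_mono; auto.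
  - rewrite (warp_Fin0 f), (warp_Fin0 g); auto.
  - intros k Hk. apply lew_minw in Hk as [Hkf Hkg].
    eapply eventually_mono;
      [|exact (eventually_and _ _ (warp_liminf f Hf k Hkf) (warp_liminf g Hg k Hkg))].
    intros n. apply lew_minw.
Qed.

Lemma join_warp f g : is_warp f -> is_warp g -> is_warp (fun x => maxw (f x) (g x)).
Proof.
  intros Hf Hg. apply warp_intro.
  - intros x y H. apply maxw_mono; apply warp_mono; auto.
  - rewrite (warp_Fin0 f), (warp_Fin0 g); auto.
  - intros k Hk. apply lew_maxw in Hk as [Hkf|Hkg].
    + eapply eventually_mono; [|exact (warp_liminf f Hf k Hkf)]. intros n H. apply lew_maxw; auto.
    + eapply eventually_mono; [|exact (warp_liminf g Hg k Hkg)]. intros n H. apply lew_maxw; auto.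
Qed.

Lemma comp_warp f g : is_warp f -> is_warp g -> is_warp (fun x => f (g x)).
Proof.
  intros Hf Hg. apply warp_intro.
  - intros x y H. apply (warp_mono f), (warp_mono g); auto.
  - rewrite (warp_Fin0 g), (warp_Fin0 f); auto.
  - intros k Hk.
    assert (Hj : exists j, lew (Fin j) (g Om) /\ lew (Fin k) (f (Fin j))).
    { assert (Hkf : lew (Fin k) (f Om)) by (eapply lew_trans; [exact Hk|apply warp_le_Om; auto]).
      destruct (eventually_witness _ (warp_liminf f Hf k Hkf)) as [m Hm].
      destruct (lew_total (Fin m) (g Om)) as [H|H]; [eauto|].
      destruct (g Om) as [d|]; [|destruct H]. exists d. split; [apply lew_refl|exact Hk]. }
    destruct Hj as [j [Hjg Hjf]].
    eapply eventually_mono; [|apply (warp_liminf g Hg j Hjg)].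
    intros n Hn. eapply lew_trans; [exact Hjf|apply warp_mono; auto].
Qed.
(** * The star operation *)

Lemma pred_warp_Fin0 : pred_warp (Fin 0) = Fin 0.
Proof.
  apply supw_eq. split.
  - intros x [n [-> [H1 H2]]]. simpl in H1. exfalso. apply H2. f_equal. lia.
  - intros z _. apply Fin0_lew.
Qed.

Lemma pred_warp_FinS n : pred_warp (Fin (S n)) = Fin n.
Proof.
  apply supw_eq. split.
  - intros x [m [-> [H1 H2]]]. simpl in *. destruct (Nat.eq_dec m (S n)); [subst; tauto|lia].
  - intros z Hz. apply Hz. exists n. repeat split; [simpl; lia|]. intros E. injection E. lia.
Qed.

Definition radj (g : wp -> wp) (n : nat) : wp := supw (fun z => lew (g z) (Fin n)).

Lemma lew_radj g n z : is_warp g -> lew z (radj g n) <-> lew (g z) (Fin n).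
Proof.
  intros Hg. split.
  - intros Hz. eapply lew_trans; [apply warp_mono, Hz; exact Hg|].
    apply warp_supw_least; auto.
  - apply (supw_ub (fun z => lew (g z) (Fin n))).
Qed.

Definition star_seq (g : wp -> wp) (k : nat) : wp :=
  match k with 0 => Fin 0 | S n => radj g n end.

Definition range (a : nat -> wp) (y : wp) : Prop := exists k, y = a k.

Definition star_explicit (g : wp -> wp) (x : wp) : wp :=
  match x with Fin k => star_seq g k | Om => supw (range (star_seq g)) end.

Section StarExplicit.
Variable f : wp -> wp.
Hypothesis Hf : is_warp f.

Lemma lew_star_explicit_Om k : lew (star_seq f k) (star_explicit f Om).
Proof. apply supw_ub. exists k. reflexivity. Qed.

Lemma star_seq_mono k k' : k <= k' -> lew (star_seq f k) (star_seq f k').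
Proof.
  intros Hk. destruct k as [|k]; [apply Fin0_lew|]. destruct k' as [|k']; [lia|].
  cbn [star_seq]. apply lew_radj; auto.
  eapply lew_trans; [exact (proj1 (lew_radj f k _ Hf) (lew_refl _))|simpl; lia].
Qed.

Lemma star_explicit_warp : is_warp (star_explicit f).
Proof.
  split; [|split; reflexivity].
  intros [k|] [k'|] H; simpl in H.
  - apply star_seq_mono, H.
  - apply lew_star_explicit_Om.
  - destruct H.
  - apply lew_refl.
Qed.

Lemma star_explicit_below x : lew (f (star_explicit f x)) (pred_warp x).
Proof.
  destruct x as [[|n]|].
  - rewrite pred_warp_Fin0. simpl. rewrite warp_Fin0; auto. apply lew_refl.
  - rewrite pred_warp_FinS. exact (proj1 (lew_radj f n _ Hf) (lew_refl _)).
  - replace (pred_warp Om) with Om; [apply lew_Om|].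
    symmetry. apply Fin_lew_all. intros k.
    apply supw_ub. exists k. split; [reflexivity|]. split; [exact I|discriminate].
Qed.

Lemma star_explicit_greatest h :
  is_warp h -> lef (fun z => f (h z)) pred_warp -> lef h (star_explicit f).
Proof.
  intros Hh Hle.
  assert (Hfin : forall k, lew (h (Fin k)) (star_seq f k)).
  { intros [|n].
    - rewrite (warp_Fin0 h Hh). apply lew_refl.
    - apply lew_radj; auto. specialize (Hle (Fin (S n))). rewrite pred_warp_FinS in Hle.
      exact Hle. }
  intros [k|]; [apply Hfin|].
  rewrite (proj2 (proj2 Hh)). apply supw_least. intros y [k ->].
  eapply lew_trans; [apply Hfin|apply lew_star_explicit_Om].
Qed.

Lemma star_eq_explicit : star f = star_explicit f.
Proof.
  apply functional_extensionality. intros x. apply supw_eq. split.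
  - intros y [h [Hh [Hle ->]]]. apply star_explicit_greatest; auto.
  - intros z Hz. apply Hz. exists (star_explicit f).
    repeat split; [apply star_explicit_warp|intros y; apply star_explicit_below].
Qed.

Lemma FinS_lew_star_explicit_Om k w : f (Fin k) = Fin w -> lew (Fin k) (star_explicit f Om).
Proof.
  intros Hk. eapply lew_trans; [|apply (lew_star_explicit_Om (S w))].
  apply lew_radj; auto. rewrite Hk. apply lew_refl.
Qed.

Lemma star_explicit_Om_le c : f (Fin (S c)) = Om -> lew (star_explicit f Om) (Fin c).
Proof.
  intros Hc. apply supw_least. intros y [[|n] ->]; [apply Fin0_lew|].
  destruct (lew_Fin_or_FinS (radj f n) c) as [H|H]; [exact H|].
  apply lew_radj in H; auto. rewrite Hc in H. destruct H.
Qed.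

Lemma star_explicit_Om_eq_Om : star_explicit f Om = Om <-> finite_valued f.
Proof.
  split.
  - intros HOm n Hn.
    pose proof (star_explicit_Om_le n (warp_Om_up f Hf _ (Fin (S n)) Hn (Nat.le_succ_diag_r n))) as H.
    rewrite HOm in H. destruct H.
  - intros Hfv. apply Fin_lew_all. intros k.
    destruct (f (Fin k)) as [w|] eqn:Hw; [|destruct (Hfv k Hw)].
    exact (FinS_lew_star_explicit_Om k w Hw).
Qed.

Lemma star_explicit_finite_valued : finite_valued (star_explicit f) <-> f Om = Om.
Proof.
  split.
  - intros Hfv. destruct (f Om) as [c|] eqn:Hc; [exfalso|reflexivity].
    apply (Hfv (S c)), Om_lew, lew_radj; auto. rewrite Hc. apply lew_refl.
  - intros HOm [|n] Hn; [discriminate|].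
    assert (H : lew Om (radj f n)) by (simpl in Hn; rewrite Hn; exact I).
    apply lew_radj in H; auto. rewrite HOm in H. destruct H.
Qed.

End StarExplicit.

(** * Approximation by sequences of time warps *)

Record approx (F : nat -> wp -> wp) (f : wp -> wp) : Prop := {
  approx_warp : forall M, is_warp (F M);
  approx_lim_warp : is_warp f;
  approx_pointwise : forall x, eventually (fun M => F M x = f x);
  approx_finite_valued : finite_valued f -> eventually (fun M => finite_valued (F M))
}.

Lemma approx_id : approx (fun _ x => x) (fun x => x).
Proof.
  split; intros; try apply eventually_always; auto using id_warp.
Qed.

Lemma finite_valued_meet_cases g1 g2 : is_warp g1 -> is_warp g2 ->
  finite_valued (fun x => minw (g1 x) (g2 x)) -> finite_valued g1 \/ finite_valued g2.
Proof.
  intros Hg1 Hg2 Hfv. apply NNPP. intros Hno.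
  apply not_or_and in Hno as [H1 H2].
  apply not_all_ex_not in H1 as [n1 N1]. apply not_all_ex_not in H2 as [n2 N2].
  apply NNPP in N1. apply NNPP in N2.
  apply (Hfv (Nat.max n1 n2)).
  rewrite (warp_Om_up g1 Hg1 (Fin n1)), (warp_Om_up g2 Hg2 (Fin n2)); auto; simpl; lia.
Qed.

Lemma finite_valued_comp_cases g1 g2 : is_warp g1 -> is_warp g2 ->
  finite_valued (fun x => g1 (g2 x)) ->
  g1 (g2 Om) <> Om \/ (finite_valued g1 /\ finite_valued g2).
Proof.
  intros Hg1 Hg2 Hfv.
  destruct (classic (g1 (g2 Om) = Om)) as [HOm|HOm]; [right|left; exact HOm].
  split.
  - intros m Hm.
    assert (Hj : exists j, lew (Fin j) (g2 Om) /\ g1 (Fin j) = Om).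
    { destruct (lew_total (Fin m) (g2 Om)) as [H|H]; [eauto|].
      destruct (g2 Om) as [d|]; [|destruct H].
      exists d. split; [apply lew_refl|exact HOm]. }
    destruct Hj as [j [Hj Hj1]].
    destruct (eventually_witness _ (warp_liminf g2 Hg2 j Hj)) as [n Hn].
    exact (Hfv n (warp_Om_up g1 Hg1 _ _ Hj1 Hn)).
  - intros n Hn. apply (Hfv n). cbv beta. rewrite Hn.
    pose proof (warp_le_Om g1 Hg1 (g2 Om)) as L. rewrite HOm in L. exact (Om_lew _ L).
Qed.

Section ApproxOperations.
Variables (G1 G2 : nat -> wp -> wp) (g1 g2 : wp -> wp).
Hypotheses (H1 : approx G1 g1) (H2 : approx G2 g2).

Lemma approx_meet : approx (fun M x => minw (G1 M x) (G2 M x)) (fun x => minw (g1 x) (g2 x)).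
Proof.
  split.
  - intros M. apply meet_warp; [apply H1|apply H2].
  - apply meet_warp; [apply H1|apply H2].
  - intros x. eapply eventually_mono; [|exact (eventually_and _ _
      (approx_pointwise _ _ H1 x) (approx_pointwise _ _ H2 x))].
    intros M [E1 E2]. rewrite E1, E2. reflexivity.
  - intros Hfv.
    destruct (finite_valued_meet_cases g1 g2 (approx_lim_warp _ _ H1) (approx_lim_warp _ _ H2) Hfv)
      as [F|F].
    + eapply eventually_mono; [|exact (approx_finite_valued _ _ H1 F)].
      intros M F1 n E. apply (F1 n). destruct (G1 M (Fin n)), (G2 M (Fin n)); easy.
    + eapply eventually_mono; [|exact (approx_finite_valued _ _ H2 F)].
      intros M F2 n E. apply (F2 n). destruct (G1 M (Fin n)), (G2 M (Fin n)); easy.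
Qed.

Lemma approx_join : approx (fun M x => maxw (G1 M x) (G2 M x)) (fun x => maxw (g1 x) (g2 x)).
Proof.
  split.
  - intros M. apply join_warp; [apply H1|apply H2].
  - apply join_warp; [apply H1|apply H2].
  - intros x. eapply eventually_mono; [|exact (eventually_and _ _
      (approx_pointwise _ _ H1 x) (approx_pointwise _ _ H2 x))].
    intros M [E1 E2]. rewrite E1, E2. reflexivity.
  - intros Hfv.
    assert (F1 : finite_valued g1).
    { intros n E. apply (Hfv n). rewrite E. reflexivity. }
    assert (F2 : finite_valued g2).
    { intros n E. apply (Hfv n). rewrite E. destruct (g1 (Fin n)); reflexivity. }
    eapply eventually_mono; [|exact (eventually_and _ _
      (approx_finite_valued _ _ H1 F1) (approx_finite_valued _ _ H2 F2))].
    intros M [F1M F2M] n. specialize (F1M n). specialize (F2M n).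
    destruct (G1 M (Fin n)), (G2 M (Fin n)); easy.
Qed.

Lemma approx_comp_pointwise x : eventually (fun M => G1 M (G2 M x) = g1 (g2 x)).
Proof.
  eapply eventually_mono; [|exact (eventually_and _ _
    (approx_pointwise _ _ H2 x) (approx_pointwise _ _ H1 (g2 x)))].
  intros M [E2 E1]. rewrite E2, E1. reflexivity.
Qed.

Lemma approx_comp : approx (fun M x => G1 M (G2 M x)) (fun x => g1 (g2 x)).
Proof.
  split.
  - intros M. apply comp_warp; [apply H1|apply H2].
  - apply comp_warp; [apply H1|apply H2].
  - exact approx_comp_pointwise.
  - intros Hfv.
    destruct (finite_valued_comp_cases g1 g2 (approx_lim_warp _ _ H1) (approx_lim_warp _ _ H2) Hfv)
      as [HOm|[F1 F2]].
    + eapply eventually_mono; [|exact (approx_comp_pointwise Om)].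
      intros M E. apply warp_finite_valued.
      * apply comp_warp; [apply H1|apply H2].
      * rewrite E. exact HOm.
    + eapply eventually_mono; [|exact (eventually_and _ _
        (approx_finite_valued _ _ H1 F1) (approx_finite_valued _ _ H2 F2))].
      intros M [F1M F2M] n.
      destruct (G2 M (Fin n)) as [w|] eqn:Ew; [apply F1M|destruct (F2M n Ew)].
Qed.

End ApproxOperations.
Section ApproxStar.
Variables (G : nat -> wp -> wp) (g : wp -> wp).
Hypothesis HG : approx G g.

Let HGM := approx_warp _ _ HG.
Let Hg := approx_lim_warp _ _ HG.

Lemma approx_radj n : eventually (fun M => radj (G M) n = radj g n).
Proof.
  destruct (radj g n) as [z|] eqn:Hr.
  - assert (Hz : lew (g (Fin z)) (Fin n)) by (apply lew_radj; auto; rewrite Hr; apply lew_refl).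
    assert (HSz : ~ lew (g (Fin (S z))) (Fin n)).
    { intros H. apply lew_radj in H; auto. rewrite Hr in H. simpl in H; lia. }
    eapply eventually_mono; [|exact (eventually_and _ _
      (approx_pointwise _ _ HG (Fin z)) (approx_pointwise _ _ HG (Fin (S z))))].
    intros M [Ez ESz]. apply lew_antisym.
    + destruct (lew_Fin_or_FinS (radj (G M) n) z) as [H|H]; [exact H|exfalso].
      apply lew_radj in H; auto. rewrite ESz in H. exact (HSz H).
    + apply lew_radj; auto. rewrite Ez. exact Hz.
  - assert (HOm : lew (g Om) (Fin n)) by (apply lew_radj; auto; rewrite Hr; apply lew_refl).
    eapply eventually_mono; [|exact (approx_pointwise _ _ HG Om)].
    intros M E. apply Om_lew, lew_radj; auto. rewrite E. exact HOm.
Qed.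

Lemma approx_star_seq k : eventually (fun M => star_seq (G M) k = star_seq g k).
Proof.
  destruct k as [|n]; [apply eventually_always; reflexivity|apply approx_radj].
Qed.

Lemma approx_star_explicit_Om :
  eventually (fun M => star_explicit (G M) Om = star_explicit g Om).
Proof.
  destruct (star_explicit g Om) as [c|] eqn:Hc.
  - assert (HSc : g (Fin (S c)) = Om).
    { destruct (g (Fin (S c))) as [w|] eqn:Ew; [exfalso|reflexivity].
      pose proof (FinS_lew_star_explicit_Om g Hg _ _ Ew) as H. rewrite Hc in H. simpl in H; lia. }
    assert (Hlow : eventually (fun M => lew (Fin c) (star_explicit (G M) Om))).
    { destruct c as [|k]; [apply eventually_always; intros; apply Fin0_lew|].
      destruct (supw_witness (range (star_seq g)) k) as [y [[k0 ->] Hk0]].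
      { change (lew (Fin (S k)) (star_explicit g Om)). rewrite Hc. apply lew_refl. }
      eapply eventually_mono; [|exact (approx_star_seq k0)].
      intros M E. eapply lew_trans; [|apply lew_star_explicit_Om]. rewrite E. exact Hk0. }
    eapply eventually_mono; [|exact (eventually_and _ _ Hlow (approx_pointwise _ _ HG (Fin (S c))))].
    intros M [Hl E]. apply lew_antisym; [|exact Hl].
    apply star_explicit_Om_le; auto. rewrite E. exact HSc.
  - apply star_explicit_Om_eq_Om in Hc; auto.
    eapply eventually_mono; [|exact (approx_finite_valued _ _ HG Hc)].
    intros M F. apply star_explicit_Om_eq_Om; auto.
Qed.

Lemma approx_star : approx (fun M => star (G M)) (star g).
Proof.
  replace (fun M => star (G M)) with (fun M => star_explicit (G M))
    by (apply functional_extensionality; intros M; symmetry; apply star_eq_explicit, HGM).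
  rewrite (star_eq_explicit g Hg).
  split.
  - intros M. apply star_explicit_warp, HGM.
  - apply star_explicit_warp, Hg.
  - intros [k|]; [apply approx_star_seq|apply approx_star_explicit_Om].
  - intros Hfv. apply star_explicit_finite_valued in Hfv; auto.
    eapply eventually_mono; [|exact (approx_pointwise _ _ HG Om)].
    intros M E. apply star_explicit_finite_valued; auto. rewrite E. exact Hfv.
Qed.

End ApproxStar.

(** * Regular truncations *)

Definition addw (x : wp) (d : nat) : wp :=
  match x with Fin a => Fin (a + d) | Om => Om end.

Definition trunc (f : wp -> wp) (M : nat) (x : wp) : wp :=
  match x with
  | Fin k => if k <=? M then f (Fin k) else minw (addw (f (Fin M)) (k - M)) (f Om)
  | Om => f Om
  end.

Lemma trunc_Fin_le f M k : k <= M -> trunc f M (Fin k) = f (Fin k).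
Proof. intros H. simpl. rewrite (proj2 (Nat.leb_le k M) H). reflexivity. Qed.

Lemma trunc_Fin_gt f M k :
  M < k -> trunc f M (Fin k) = minw (addw (f (Fin M)) (k - M)) (f Om).
Proof. intros H. simpl. rewrite (proj2 (Nat.leb_gt k M) H). reflexivity. Qed.

Section Trunc.
Variable f : wp -> wp.
Hypothesis Hf : is_warp f.

Lemma trunc_warp M : is_warp (trunc f M).
Proof.
  assert (Hadd : forall x d, lew x (addw x d) /\ lew (Fin d) (addw x d)).
  { intros [a|] d; simpl; split; auto; lia. }
  assert (Hle_Om : forall k, lew (trunc f M (Fin k)) (f Om)).
  { intros k. destruct (Nat.le_gt_cases k M).
    - rewrite trunc_Fin_le; auto. apply warp_le_Om, Hf.
    - rewrite trunc_Fin_gt; auto. apply minw_lew_r. }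
  apply warp_intro.
  - intros [k|] [k'|] Hkk'; simpl in Hkk'; [|apply Hle_Om|destruct Hkk'|apply lew_refl].
    destruct (Nat.le_gt_cases k' M), (Nat.le_gt_cases k M); try lia.
    + rewrite !trunc_Fin_le; auto. apply warp_mono; auto.
    + rewrite trunc_Fin_le, trunc_Fin_gt; auto. apply lew_minw. split.
      * eapply lew_trans; [apply warp_mono; auto|apply Hadd]. simpl; lia.
      * apply warp_le_Om, Hf.
    + rewrite !trunc_Fin_gt; auto. apply minw_mono; [|apply lew_refl].
      destruct (f (Fin M)); simpl; auto; lia.
  - rewrite trunc_Fin_le; [apply warp_Fin0, Hf|lia].
  - intros k Hk. exists (S (M + k)). intros n Hn.
    rewrite trunc_Fin_gt; [|lia]. apply lew_minw. split; [|exact Hk].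
    eapply lew_trans; [|apply Hadd]. simpl; lia.
Qed.

Lemma trunc_regular M : regular (trunc f M).
Proof.
  destruct (f (Fin M)) as [a|] eqn:Ha.
  - destruct (f Om) as [c|] eqn:Hc.
    + exists (S M + c), 0, (Some (Z.of_nat c)). split; [left; reflexivity|].
      intros n Hn. rewrite trunc_Fin_gt, Ha, Hc; [|lia]. simpl. split; [lia|f_equal; lia].
    + exists (S M), 1, (Some (Z.of_nat a - Z.of_nat M)%Z). split; [right; reflexivity|].
      intros n Hn. rewrite trunc_Fin_gt, Ha, Hc; [|lia]. simpl. split; [lia|f_equal; lia].
  - exists (S M), 0, None. split; [left; reflexivity|].
    intros n Hn. rewrite trunc_Fin_gt, Ha, (warp_Om_up f Hf _ Om Ha); [reflexivity|apply lew_Om|lia].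
Qed.

Lemma approx_trunc : approx (trunc f) f.
Proof.
  split.
  - exact trunc_warp.
  - exact Hf.
  - intros [k|]; [|apply eventually_always; reflexivity].
    eapply eventually_mono; [|exact (eventually_ge k)]. intros M. apply trunc_Fin_le.
  - intros Hfv. apply eventually_always. intros M k.
    destruct (Nat.le_gt_cases k M).
    + rewrite trunc_Fin_le; auto.
    + rewrite trunc_Fin_gt; auto.
      destruct (f (Fin M)) eqn:E; [destruct (f Om); discriminate|destruct (Hfv M E)].
Qed.

End Trunc.

Lemma approx_eval t sigma : (forall i, is_warp (sigma i)) ->
  approx (fun M => eval t (fun i => trunc (sigma i) M)) (eval t sigma).
Proof.
  intros Hsigma. induction t; simpl.
  - apply approx_trunc, Hsigma.
  - exact (approx_meet _ _ _ _ IHt1 IHt2).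
  - exact (approx_join _ _ _ _ IHt1 IHt2).
  - exact (approx_comp _ _ _ _ IHt1 IHt2).
  - exact (approx_star _ _ IHt).
  - apply approx_id.
Qed.

Theorem theorem3p11 (s t : term) :
  satisfies W_carrier s t <-> satisfies R_carrier s t.
Proof.
  split.
  - intros HW sigma Hsigma. apply HW. intros i. apply Hsigma.
  - intros HR sigma Hsigma x.
    destruct (eventually_witness _ (eventually_and _ _
      (approx_pointwise _ _ (approx_eval s sigma Hsigma) x)
      (approx_pointwise _ _ (approx_eval t sigma Hsigma) x))) as [M [Es Et]].
    rewrite <- Es, <- Et. apply HR. intros i.
    split; [apply trunc_warp|apply trunc_regular]; apply Hsigma.
Qed.
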